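(* Let $h=u+v+u^{-1}+v^{-1}+u^{-1}v^{-1}\in A=\mathbb C\langle u^{\pm1},v^{\pm1}\rangle$. For all integers $N,M>0$, $\{h^N,h^M\}_K\in[A,A]$, i.e. $\{h^N,h^M\}_K\equiv0\bmod[A,A]$.
   Context: $A$ is the group algebra over $\mathbb C$ of the free group on $u,v$. $[A,A]$ is the linear span of all $ab-ba$, $a,b\in A$. $\mu:A\otimes A\to A$, $\mu(a\otimes b)=ab$; $A\otimes A$ has componentwise multiplication. The double bracket $\llbracket\cdot\rrbracket_K:A\otimes A\to A\otimes A$ is the linear map with $\llbracket u\otimes v\rrbracket_K=-vu\otimes1$, $\llbracket v\otimes u\rrbracket_K=uv\otimes1$, $\llbracket u\otimes u\rrbracket_K=\llbracket v\otimes v\rrbracket_K=0$, extended by the Leibniz rules $\llbracket a\otimes bc\rrbracket_K=\llbracket a\otimes b\rrbracket_K(1\otimes c)+(b\otimes1)\llbracket a\otimes c\rrbracket_K$ and $\llbracket ab\otimes c\rrbracket_K=\llbracket a\otimes c\rrbracket_K(b\otimes1)+(1\otimes a)\llbracket b\otimes c\rrbracket_K$ (so for monomials $a=a_1\cdots a_k$, $b=b_1\cdots b_m$ in letters $u^{\pm1},v^{\pm1}$, with $\llbracket a_i\otimes b_j\rrbracket_K=x_{ij}\otimes y_{ij}$, $\llbracket a\otimes b\rrbracket_K=\sum_{i,j}(b_1\cdots b_{j-1}x_{ij}a_{i+1}\cdots a_k)\otimes(a_1\cdots a_{i-1}y_{ij}b_{j+1}\cdots b_m)$; the values on inverse letters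 are those forced by the Leibniz rules, e.g. $\llbracket u^{-1}\otimes v^{-1}\rrbracket_K=-1\otimes u^{-1}v^{-1}$, $\llbracket u^{-1}\otimes v\rrbracket_K=v\otimes u^{-1}$, $\llbracket u\otimes v^{-1}\rrbracket_K=u\otimes v^{-1}$, $\llbracket v^{-1}\otimes u^{-1}\rrbracket_K=1\otimes v^{-1}u^{-1}$, $\llbracket v\otimes u^{-1}\rrbracket_K=-v\otimes u^{-1}$, $\llbracket v^{-1}\otimes u\rrbracket_K=-u\otimes v^{-1}$). The bracket is $\{a,b\}_K=\mu(\llbracket a\otimes b\rrbracket_K)$. *)

(* C is modelled as R[i] (complex numbers over a real field
   R : realType, from mathcomp-real-closed's complex.v). *)
From HB Require Import structures.
From mathcomp Require Import all_boot all_order all_algebra.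
From mathcomp Require Import reals complex.
Set Implicit Arguments. Unset Strict Implicit. Unset Printing Implicit Defensive.
Import Order.TTheory GRing.Theory Num.Theory.
Local Open Scope ring_scope.

(* Letters u^{+-1}, v^{+-1}: (is_v, is_inverse). *)
Definition letter := (bool * bool)%type.
Definition U  : letter := (false, false).
Definition Ui : letter := (false, true).
Definition V  : letter := (true, false).
Definition Vi : letter := (true, true).
Definition linv (l : letter) : letter := (l.1, ~~ l.2).

Definition word := seq letter.

Definition reduce (w : word) : word :=
  foldr (fun l acc => match acc with
                      | l' :: acc' => if l' == linv l then acc' else l :: acc
                      | [::] => [:: l] end) [::] w.

Section GroupAlgebra.
Variable K : comRingType.

(* An element of the group algebra K[F(u,v)] is represented by a formal finite
   linear combination of words; its coefficient on a group element g (a reduced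
   word) is the sum of the coefficients of the words reducing to g. *)
Definition alg := seq (K * word).
Definition coefA (x : alg) (g : word) : K := \sum_(p <- x | reduce p.2 == g) p.1.
Definition eqA (x y : alg) : Prop := forall g, coefA x g = coefA y g.

Definition addA (x y : alg) : alg := x ++ y.
Definition scaleA (c : K) (x : alg) : alg := [seq (c * p.1, p.2) | p <- x].
Definition mulA (x y : alg) : alg :=
  flatten [seq [seq (p.1 * q.1, p.2 ++ q.2) | q <- y] | p <- x].
Definition oneA : alg := [:: (1, [::])].
Definition powA (x : alg) (n : nat) : alg := iter n (mulA x) oneA.

Definition in_commA (x : alg) : Prop :=
  exists s : seq (K * alg * alg),
    eqA x (flatten [seq scaleA p.1.1 (addA (mulA p.1.2 p.2)
                                        (scaleA (-1) (mulA p.2 p.1.2))) | p <- s]).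

(* Elements of A (x) A: formal combinations of pairs of words. *)
Definition alg2 := seq (K * (word * word)).

Definition dbr_letter (a b : letter) : alg2 :=
  match a, b with
  | (false, false), (true, false) => [:: (-1, ([:: V; U], [::]))]        (* u (x) v *)
  | (true, false), (false, false) => [:: (1, ([:: U; V], [::]))]         (* v (x) u *)
  | (false, true), (true, true) => [:: (-1, ([::], [:: Ui; Vi]))]        (* u^-1 (x) v^-1 *)
  | (false, true), (true, false) => [:: (1, ([:: V], [:: Ui]))]          (* u^-1 (x) v *)
  | (false, false), (true, true) => [:: (1, ([:: U], [:: Vi]))]          (* u (x) v^-1 *)
  | (true, true), (false, true) => [:: (1, ([::], [:: Vi; Ui]))]         (* v^-1 (x) u^-1 *)
  | (true, false), (false, true) => [:: (-1, ([:: V], [:: Ui]))]         (* v (x) u^-1 *)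
  | (true, true), (false, false) => [:: (-1, ([:: U], [:: Vi]))]         (* v^-1 (x) u *)
  | _, _ => [::]   (* brackets of a generator (or inverse) with itself / its inverse *)
  end.

(* Double bracket of two words a = a_1..a_k, b = b_1..b_m (0-based indices):
   sum_{i,j} (b_1..b_{j-1} x_ij a_{i+1}..a_k) (x) (a_1..a_{i-1} y_ij b_{j+1}..b_m). *)
Definition dbr_word (a b : word) : alg2 :=
  flatten [seq flatten [seq
     [seq (t.1, (take j b ++ t.2.1 ++ drop i.+1 a, take i a ++ t.2.2 ++ drop j.+1 b))
       | t <- dbr_letter (nth U a i) (nth U b j)]
     | j <- iota 0 (size b)] | i <- iota 0 (size a)].

(* {x, y}_K = mu(dbr(x (x) y)), extended bilinearly from group elements
   (reduced words). *)
Definition bracketK (x y : alg) : alg :=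
  flatten [seq flatten [seq
     [seq (p.1 * q.1 * t.1, t.2.1 ++ t.2.2) | t <- dbr_word (reduce p.2) (reduce q.2)]
     | q <- y] | p <- x].

Definition hA : alg :=
  [:: (1, [:: U]); (1, [:: V]); (1, [:: Ui]); (1, [:: Vi]); (1, [:: Ui; Vi])].

End GroupAlgebra.

(* Write B(x, y; z, w) = sum x' z x'' w, where [[x (x) y]] = sum x' (x) x'',
   so that {x, y} = B(x, y; 1, 1).  The Leibniz rules give
     B(x1 x2, y; z, w) = B(x1, y; x2 z, w) + B(x2, y; z x1, w),
     B(x, y1 y2; z, w) = B(x, y1; z, y2 w) + y1 B(x, y2; z, w),
   and y1 B(x, y2; z, w) = B(x, y2; z, w y1) modulo [A,A].  Peeling off one
   factor h at a time reduces the claim to B(h, h; h^p, h^q) in [A,A].  A direct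
   computation of [[h (x) h]] shows B(h, h; h^p, h^q) = (h X - X h) h^(p+q)
   modulo [A,A] with X = -(u + v^-1), and this is the commutator
   [h, X h^(p+q)] since h commutes with its powers.  As the bracket is computed
   on words, it must also be checked to respect free reduction; this comes down
   to the compatibility of the letter table with the Leibniz rule applied to
   l l^-1 = 1. *)

From Pilot Require Import Defs.
From HB Require Import structures.
From mathcomp Require Import all_boot all_algebra.
From mathcomp Require Import reals complex.
From mathcomp Require Import ring zify.
(* Re-imported so that [mulA] and [addA] denote the group-algebra operations,
   not those of [fraction.FracField]. *)
Import Pilot.Defs.
Set Implicit Arguments. Unset Strict Implicit. Unset Printing Implicit Defensive.
Import GRing.Theory.

(** * Free reduction *)

Definition reduce_step (l : letter) (w : word) : word :=
  if w is l' :: w' then (if l' == linv l then w' else l :: w) else [:: l].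

Lemma reduceE w : reduce w = foldr reduce_step [::] w.
Proof. by []. Qed.

Lemma linvK : involutive linv.
Proof. by case=> a b; rewrite /linv /= negbK. Qed.

Fixpoint is_reduced (w : word) : bool :=
  match w with
  | x :: ((y :: _) as w') => (y != linv x) && is_reduced w'
  | _ => true
  end.

Lemma reduced_step l w : is_reduced w -> is_reduced (reduce_step l w).
Proof.
case: w => [|y w] //= Hw; case: ifP => Hy; last by rewrite /= Hy.
by move: Hw; case: w => [|z w] //= /andP[].
Qed.

Lemma reduced_foldr_step w u : is_reduced w -> is_reduced (foldr reduce_step w u).
Proof. by move=> Hw; elim: u => //= l u IH; apply: reduced_step. Qed.

Lemma reduced_reduce w : is_reduced (reduce w).
Proof. exact: reduced_foldr_step. Qed.

Lemma reduce_stepK l w :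
  is_reduced w -> reduce_step l (reduce_step (linv l) w) = w.
Proof.
case: w => [|y w] /=; first by rewrite eqxx.
move=> Hw; case: ifP => [/eqP|_]; last by rewrite /= eqxx.
rewrite linvK => <-; case: w Hw => [|z w] //= /andP[Hz _].
by rewrite (negbTE Hz).
Qed.

Lemma reduce_step_foldr l w v : is_reduced w -> is_reduced v ->
  reduce_step l (foldr reduce_step w v) = foldr reduce_step w (reduce_step l v).
Proof.
move=> Hw; case: v => [|y v] //= Hv; case: ifP => // /eqP ->.
by rewrite reduce_stepK // reduced_foldr_step.
Qed.

Lemma foldr_step_reduce w u :
  is_reduced w -> foldr reduce_step w u = foldr reduce_step w (reduce u).
Proof.
move=> Hw; elim: u => //= l u IH.
by rewrite IH reduce_step_foldr // reduced_reduce.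
Qed.

Lemma reduce_cat u v : reduce (u ++ v) = foldr reduce_step (reduce v) u.
Proof. by rewrite !reduceE foldr_cat. Qed.

Lemma reduce_cat_reduce A w C : reduce (A ++ w ++ C) = reduce (A ++ reduce w ++ C).
Proof.
rewrite !reduce_cat; congr foldr.
by rewrite (foldr_step_reduce _ (reduced_reduce C)).
Qed.

Lemma reduce_congr A w1 w2 C : reduce w1 = reduce w2 ->
  reduce (A ++ w1 ++ C) = reduce (A ++ w2 ++ C).
Proof. by move=> E; rewrite reduce_cat_reduce E -reduce_cat_reduce. Qed.

Lemma reduce_idem w : reduce (reduce w) = reduce w.
Proof. by have := reduce_cat_reduce [::] w [::]; rewrite /= !cats0 => <-. Qed.

Lemma reduce_cancel p l q : reduce (p ++ [:: l; linv l] ++ q) = reduce (p ++ q).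
Proof. by rewrite reduce_cat_reduce /= eqxx. Qed.

Lemma reduce_fixed_or_cancel a :
  reduce a = a \/ exists p l q, a = p ++ [:: l; linv l] ++ q.
Proof.
elim: a => [|x a [IH|[p [l [q ->]]]]]; first by left.
- case: a IH => [|y a] IH; first by left.
  have -> : reduce [:: x, y & a] = reduce_step x (reduce (y :: a)) by [].
  rewrite IH /=; case: ifP => [/eqP Ey|_]; last by left.
  by right; exists [::], x, a; rewrite Ey.
- by right; exists (x :: p), l, q.
Qed.

Section GroupAlgebraBracket.
Variable K : comNzRingType.
Local Open Scope ring_scope.

(** * Coefficients of the double bracket of words *)

Definition coefw (g w : word) : K := (reduce w == g)%:R.

Lemma coefw_congr g A w1 w2 C : reduce w1 = reduce w2 ->
  coefw g (A ++ w1 ++ C) = coefw g (A ++ w2 ++ C).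
Proof. by move=> E; rewrite /coefw (reduce_congr _ _ E). Qed.

Lemma coefw_reducel g w a : coefw g (reduce w ++ a) = coefw g (w ++ a).
Proof. exact: (coefw_congr g [::] a (reduce_idem w)). Qed.

Lemma coefw_reducer g a w : coefw g (a ++ reduce w) = coefw g (a ++ w).
Proof. by have := coefw_congr g a [::] (reduce_idem w); rewrite !cats0. Qed.

Lemma coefw_reduce2 g A u M v C :
  coefw g (A ++ u ++ M ++ v ++ C) = coefw g (A ++ reduce u ++ M ++ reduce v ++ C).
Proof.
rewrite (coefw_congr g A (M ++ v ++ C) (esym (reduce_idem u))).
by have := coefw_congr g (A ++ reduce u ++ M) C (esym (reduce_idem v)); rewrite -!catA.
Qed.

Lemma drop_cat_leq (T : Type) n (s1 s2 : seq T) :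
  (n <= size s1)%N -> drop n (s1 ++ s2) = drop n s1 ++ s2.
Proof.
rewrite drop_cat leq_eqVlt => /orP[/eqP En|-> //].
by rewrite En ltnn subnn drop0 drop_size.
Qed.

Definition dbr_term (a b : word) (i j : nat) (t : K * (word * word)) :=
  (t.1, (take j b ++ t.2.1 ++ drop i.+1 a, take i a ++ t.2.2 ++ drop j.+1 b)).

Lemma big_dbr_word (a b : word) (F : K * (word * word) -> K) :
  \sum_(t <- dbr_word K a b) F t =
  \sum_(i <- iota 0 (size a)) \sum_(j <- iota 0 (size b))
     \sum_(t <- dbr_letter K (nth U a i) (nth U b j)) F (dbr_term a b i j t).
Proof.
rewrite /dbr_word big_flatten big_map; apply: eq_bigr => i _.
by rewrite big_flatten big_map; apply: eq_bigr => j _; rewrite big_map.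
Qed.

Lemma big_dbr_word_catl (a1 a2 b : word) (F : K * (word * word) -> K) :
  \sum_(t <- dbr_word K (a1 ++ a2) b) F t =
  \sum_(t <- dbr_word K a1 b) F (t.1, (t.2.1 ++ a2, t.2.2)) +
  \sum_(t <- dbr_word K a2 b) F (t.1, (t.2.1, a1 ++ t.2.2)).
Proof.
rewrite !big_dbr_word size_cat iotaD big_cat /=; congr (_ + _).
  rewrite big_seq [RHS]big_seq; apply: eq_bigr => i; rewrite mem_iota /= => Hi.
  apply: eq_bigr => j _; rewrite nth_cat Hi; apply: eq_bigr => t _.
  by rewrite /dbr_term /= takel_cat ?(ltnW Hi) // drop_cat_leq // -!catA.
rewrite -[X in iota X]addn0 iotaDl big_map; apply: eq_bigr => i _.
apply: eq_bigr => j _; rewrite nth_cat ltnNge leq_addr /= addKn.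
apply: eq_bigr => t _; rewrite /dbr_term /=.
rewrite take_cat ltnNge leq_addr /= addKn drop_cat ltnNge ltnW ?ltnS ?leq_addr //=.
by rewrite -addnS addKn -!catA.
Qed.

Lemma big_dbr_word_catr (a b1 b2 : word) (F : K * (word * word) -> K) :
  \sum_(t <- dbr_word K a (b1 ++ b2)) F t =
  \sum_(t <- dbr_word K a b1) F (t.1, (t.2.1, t.2.2 ++ b2)) +
  \sum_(t <- dbr_word K a b2) F (t.1, (b1 ++ t.2.1, t.2.2)).
Proof.
rewrite !big_dbr_word -big_split; apply: eq_bigr => i _.
rewrite size_cat iotaD big_cat /=; congr (_ + _).
  rewrite big_seq [RHS]big_seq; apply: eq_bigr => j; rewrite mem_iota /= => Hj.
  rewrite nth_cat Hj; apply: eq_bigr => t _.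
  by rewrite /dbr_term /= takel_cat ?(ltnW Hj) // drop_cat_leq // -!catA.
rewrite -[X in iota X]addn0 iotaDl big_map; apply: eq_bigr => j _.
rewrite nth_cat ltnNge leq_addr /= addKn; apply: eq_bigr => t _; rewrite /dbr_term /=.
rewrite take_cat ltnNge leq_addr /= addKn drop_cat ltnNge ltnW ?ltnS ?leq_addr //=.
by rewrite -addnS addKn -!catA.
Qed.

Definition dbr_coef (g P a b r s : word) : K :=
  \sum_(t <- dbr_word K a b) t.1 * coefw g (P ++ t.2.1 ++ r ++ t.2.2 ++ s).

Lemma dbr_coef_catl g P a1 a2 b r s :
  dbr_coef g P (a1 ++ a2) b r s =
  dbr_coef g P a1 b (a2 ++ r) s + dbr_coef g P a2 b (r ++ a1) s.
Proof.
by rewrite /dbr_coef big_dbr_word_catl; congr (_ + _); apply: eq_bigr => t _; rewrite !catA.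
Qed.

Lemma dbr_coef_catr g P a b1 b2 r s :
  dbr_coef g P a (b1 ++ b2) r s =
  dbr_coef g P a b1 r (b2 ++ s) + dbr_coef g (P ++ b1) a b2 r s.
Proof.
by rewrite /dbr_coef big_dbr_word_catr; congr (_ + _); apply: eq_bigr => t _; rewrite !catA.
Qed.

Lemma dbr_coef_congr_mid g P a b r r' s : reduce r = reduce r' ->
  dbr_coef g P a b r s = dbr_coef g P a b r' s.
Proof.
move=> E; apply: eq_bigr => t _; congr (_ * _).
by have := coefw_congr g (P ++ t.2.1) (t.2.2 ++ s) E; rewrite -!catA.
Qed.

Lemma dbr_coef_congr_post g P a b r s s' : reduce s = reduce s' ->
  dbr_coef g P a b r s = dbr_coef g P a b r s'.
Proof.
move=> E; apply: eq_bigr => t _; congr (_ * _).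
by have := coefw_congr g (P ++ t.2.1 ++ r ++ t.2.2) [::] E; rewrite !cats0 -!catA.
Qed.

Lemma dbr_coef_congr_pre g P P' a b r s : reduce P = reduce P' ->
  dbr_coef g P a b r s = dbr_coef g P' a b r s.
Proof. by move=> E; apply: eq_bigr => t _; rewrite (coefw_congr g [::] _ E). Qed.

(* The table [dbr_letter] is compatible with the Leibniz rules applied to
   [l * l^-1 = 1] on either side of the bracket. *)
Lemma dbr_letter_invl (l m : letter) (F : word -> word -> K) :
  \sum_(t <- dbr_letter K l m) t.1 * F (reduce (t.2.1 ++ [:: linv l])) (reduce t.2.2) +
  \sum_(t <- dbr_letter K (linv l) m) t.1 * F (reduce t.2.1) (reduce (l :: t.2.2)) = 0.
Proof. by case: l => [[] []]; case: m => [[] []]; rewrite /= ?big_cons ?big_nil /=; ring. Qed.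

Lemma dbr_letter_invr (l m : letter) (F : word -> word -> K) :
  \sum_(t <- dbr_letter K l m) t.1 * F (reduce t.2.1) (reduce (t.2.2 ++ [:: linv m])) +
  \sum_(t <- dbr_letter K l (linv m)) t.1 * F (reduce (m :: t.2.1)) (reduce t.2.2) = 0.
Proof. by case: l => [[] []]; case: m => [[] []]; rewrite /= ?big_cons ?big_nil /=; ring. Qed.

Lemma dbr_coef_invl g P l b r s :
  dbr_coef g P [:: l] b (linv l :: r) s + dbr_coef g P [:: linv l] b (r ++ [:: l]) s = 0.
Proof.
rewrite /dbr_coef !big_dbr_word /= !big_cons !big_nil !addr0 -big_split /=.
apply: big1 => j _.
pose F u v := coefw g ((P ++ take j b) ++ u ++ r ++ v ++ (drop j.+1 b ++ s)).
apply: etrans (dbr_letter_invl l (nth U b j) F); rewrite /F.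
by congr (_ + _); apply: eq_bigr => t _; rewrite -coefw_reduce2 /dbr_term /= !cats0 -!catA.
Qed.

Lemma dbr_coef_invr g P a m r s :
  dbr_coef g P a [:: m] r (linv m :: s) + dbr_coef g (P ++ [:: m]) a [:: linv m] r s = 0.
Proof.
rewrite /dbr_coef !big_dbr_word -big_split; apply: big1 => i _ /=.
rewrite !big_cons !big_nil !addr0 /=.
pose F u v := coefw g (P ++ u ++ (drop i.+1 a ++ r ++ take i a) ++ v ++ s).
apply: etrans (dbr_letter_invr (nth U a i) m F); rewrite /F.
by congr (_ + _); apply: eq_bigr => t _; rewrite -coefw_reduce2 /dbr_term /= !cats0 -!catA.
Qed.

Lemma dbr_coef_cancell g P p l q b r s :
  dbr_coef g P (p ++ [:: l; linv l] ++ q) b r s = dbr_coef g P (p ++ q) b r s.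
Proof.
rewrite !dbr_coef_catl (dbr_coef_catl _ _ [:: l]) dbr_coef_invl add0r.
rewrite (@dbr_coef_congr_mid g P p b (([:: l; linv l] ++ q) ++ r) (q ++ r)); last first.
  by rewrite -catA (reduce_cancel [::] l (q ++ r)).
rewrite (@dbr_coef_congr_mid g P q b ((r ++ p) ++ [:: l; linv l]) (r ++ p)) //.
by have := reduce_cancel (r ++ p) l [::]; rewrite !cats0.
Qed.

Lemma dbr_coef_cancelr g P a p m q r s :
  dbr_coef g P a (p ++ [:: m; linv m] ++ q) r s = dbr_coef g P a (p ++ q) r s.
Proof.
rewrite !dbr_coef_catr (dbr_coef_catr _ _ _ [:: m]) dbr_coef_invr add0r.
rewrite (@dbr_coef_congr_post g P a p r (([:: m; linv m] ++ q) ++ s) (q ++ s)); last first.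
  by rewrite -catA (reduce_cancel [::] m (q ++ s)).
rewrite (@dbr_coef_congr_pre g ((P ++ p) ++ [:: m; linv m]) (P ++ p)) //.
by have := reduce_cancel (P ++ p) m [::]; rewrite !cats0.
Qed.

Lemma dbr_coef_reducel g P a b r s : dbr_coef g P a b r s = dbr_coef g P (reduce a) b r s.
Proof.
elim: {a}(size a).+1 {-2}a (ltnSn (size a)) => // n IH a Ha.
case: (reduce_fixed_or_cancel a) => [-> //|[p [l [q Ea]]]].
rewrite Ea dbr_coef_cancell reduce_cancel IH //.
by move: Ha; rewrite Ea !size_cat /=; lia.
Qed.

Lemma dbr_coef_reducer g P a b r s : dbr_coef g P a b r s = dbr_coef g P a (reduce b) r s.
Proof.
elim: {b}(size b).+1 {-2}b (ltnSn (size b)) => // n IH b Hb.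
case: (reduce_fixed_or_cancel b) => [-> //|[p [l [q Eb]]]].
rewrite Eb dbr_coef_cancelr reduce_cancel IH //.
by move: Hb; rewrite Eb !size_cat /=; lia.
Qed.

(** * Evaluation on the group algebra and commutators *)

Implicit Types A B C X Y Z W x : alg K.

Definition evalA X (f : word -> K) : K := \sum_(p <- X) p.1 * f p.2.

Lemma coefA_evalA X g : coefA X g = evalA X (coefw g).
Proof.
rewrite /coefA big_mkcond; apply: eq_bigr => p _.
by rewrite /coefw; case: eqP; rewrite ?mulr1 ?mulr0.
Qed.

Lemma evalA_ext X f f' : f =1 f' -> evalA X f = evalA X f'.
Proof. by move=> E; apply: eq_bigr => p _; rewrite E. Qed.

Lemma evalA0 X : evalA X (fun _ => 0) = 0.
Proof. by rewrite /evalA big1 // => p _; rewrite mulr0. Qed.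

Lemma evalA_add X f f' : evalA X (fun w => f w + f' w) = evalA X f + evalA X f'.
Proof. by rewrite /evalA -big_split; apply: eq_bigr => p _; rewrite mulrDr. Qed.

Lemma evalA_mull X c f : evalA X (fun w => c * f w) = c * evalA X f.
Proof. by rewrite /evalA mulr_sumr; apply: eq_bigr => p _; rewrite mulrCA. Qed.

Lemma evalA_sum (T : Type) X (s : seq T) (F : T -> word -> K) :
  evalA X (fun w => \sum_(t <- s) F t w) = \sum_(t <- s) evalA X (F t).
Proof. by rewrite /evalA exchange_big; apply: eq_bigr => p _; rewrite mulr_sumr. Qed.

Lemma evalA_cat X X' f : evalA (X ++ X') f = evalA X f + evalA X' f.
Proof. by rewrite /evalA big_cat. Qed.

Lemma evalA_flatten (T : Type) (F : T -> alg K) s f :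
  evalA (flatten [seq F i | i <- s]) f = \sum_(i <- s) evalA (F i) f.
Proof. by rewrite /evalA big_flatten big_map. Qed.

Lemma evalA_scaleA c X f : evalA (scaleA c X) f = c * evalA X f.
Proof. by rewrite /evalA big_map mulr_sumr; apply: eq_bigr => p _; rewrite mulrA. Qed.

Lemma evalA_mulA A B f :
  evalA (mulA A B) f = evalA A (fun a => evalA B (fun b => f (a ++ b))).
Proof.
rewrite /evalA big_flatten big_map; apply: eq_bigr => a _.
by rewrite big_map mulr_sumr; apply: eq_bigr => b _; rewrite mulrA.
Qed.

Lemma evalA_oneA f : evalA (oneA K) f = f [::].
Proof. by rewrite /evalA big_cons big_nil addr0 mul1r. Qed.

Lemma evalA_exch A B (F : word -> word -> K) :
  evalA A (fun a => evalA B (fun b => F a b)) = evalA B (fun b => evalA A (fun a => F a b)).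
Proof.
rewrite /evalA; under eq_bigr do rewrite mulr_sumr.
rewrite exchange_big; apply: eq_bigr => q _; rewrite mulr_sumr.
by apply: eq_bigr => p _; rewrite mulrCA.
Qed.

Lemma big_pred1_uniq (T : eqType) (s : seq T) (i : T) (F : T -> K) :
  uniq s -> i \in s -> \sum_(j <- s | i == j) F j = F i.
Proof.
elim: s => // x s IH /= /andP[Hx Hs]; rewrite in_cons big_cons.
case: eqP => [-> _|_ /= Hi]; last exact: IH.
rewrite big1_seq ?addr0 // => j /andP[/eqP Ej js].
by move: Hx; rewrite Ej js.
Qed.

Lemma evalA_reduced X (f : word -> K) (s : seq word) :
  uniq s -> (forall p, p \in X -> reduce p.2 \in s) ->
  evalA X (f \o reduce) = \sum_(w <- s) coefA X w * f w.
Proof.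
move=> Us HX; rewrite /evalA.
transitivity (\sum_(w <- s) \sum_(p <- X | reduce p.2 == w) p.1 * f (reduce p.2)).
  rewrite (exchange_big_dep xpredT) //= big_seq [RHS]big_seq.
  by apply: eq_bigr => p Xp; rewrite big_pred1_uniq ?HX.
by apply: eq_bigr => w _; rewrite /coefA mulr_suml; apply: eq_bigr => p /eqP ->.
Qed.

Lemma evalA_eqA X X' f : eqA X X' -> f \o reduce =1 f -> evalA X f = evalA X' f.
Proof.
move=> EX Ef; rewrite -!(evalA_ext _ Ef).
set s := undup [seq reduce p.2 | p <- X ++ X'].
have mem_s p : p \in X ++ X' -> reduce p.2 \in s.
  by move=> Xp; rewrite mem_undup; apply: map_f.
rewrite !(@evalA_reduced _ f s) ?undup_uniq //.
- by apply: eq_bigr => w _; rewrite EX.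
- by move=> p Xp; rewrite mem_s // mem_cat Xp orbT.
- by move=> p Xp; rewrite mem_s // mem_cat Xp.
Qed.

Lemma eqA_refl X : eqA X X.
Proof. by []. Qed.

Lemma eqA_sym X Y : eqA X Y -> eqA Y X.
Proof. by move=> E g; rewrite E. Qed.

Lemma eqA_trans X Y Z : eqA X Y -> eqA Y Z -> eqA X Z.
Proof. by move=> E1 E2 g; rewrite E1 E2. Qed.

Lemma coefA_cat X Y g : coefA (X ++ Y) g = coefA X g + coefA Y g.
Proof. by rewrite !coefA_evalA evalA_cat. Qed.

Lemma coefA_scaleA c X g : coefA (scaleA c X) g = c * coefA X g.
Proof. by rewrite !coefA_evalA evalA_scaleA. Qed.

Lemma eqA_cat X X' Y Y' : eqA X X' -> eqA Y Y' -> eqA (X ++ Y) (X' ++ Y').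
Proof. by move=> E1 E2 g; rewrite !coefA_cat E1 E2. Qed.

Lemma eqA_scaleA c X Y : eqA X Y -> eqA (scaleA c X) (scaleA c Y).
Proof. by move=> E g; rewrite !coefA_scaleA E. Qed.

Lemma mulA_eqr A B B' : eqA B B' -> eqA (mulA A B) (mulA A B').
Proof.
move=> E g; rewrite !coefA_evalA !evalA_mulA; apply: evalA_ext => a.
by apply: evalA_eqA => // w; rewrite /= coefw_reducer.
Qed.

Lemma mulA_eql A A' B : eqA A A' -> eqA (mulA A B) (mulA A' B).
Proof.
move=> E g; rewrite !coefA_evalA !evalA_mulA; apply: evalA_eqA => // w.
by apply: evalA_ext => b; rewrite coefw_reducel.
Qed.

Lemma mulA_assoc A B C : eqA (mulA (mulA A B) C) (mulA A (mulA B C)).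
Proof.
move=> g; rewrite !coefA_evalA !evalA_mulA; apply: evalA_ext => a.
by rewrite evalA_mulA; apply: evalA_ext => b; apply: evalA_ext => c; rewrite catA.
Qed.

Lemma mulA_catl A B C : mulA (A ++ B) C = mulA A C ++ mulA B C.
Proof. by rewrite /mulA map_cat flatten_cat. Qed.

Lemma mulA_catr A B C : eqA (mulA A (B ++ C)) (mulA A B ++ mulA A C).
Proof.
move=> g; rewrite !coefA_evalA evalA_cat !evalA_mulA -evalA_add.
by apply: evalA_ext => a; rewrite evalA_cat.
Qed.

Lemma mul1A X : eqA (mulA (oneA K) X) X.
Proof. by move=> g; rewrite !coefA_evalA evalA_mulA evalA_oneA. Qed.

Lemma mulA1 X : eqA (mulA X (oneA K)) X.
Proof.
by move=> g; rewrite !coefA_evalA evalA_mulA; apply: evalA_ext => a; rewrite evalA_oneA cats0.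
Qed.

Lemma mulA_scalel c A B : eqA (mulA (scaleA c A) B) (scaleA c (mulA A B)).
Proof. by move=> g; rewrite !coefA_evalA evalA_scaleA !evalA_mulA evalA_scaleA. Qed.

Lemma in_commA_eqA X Y : eqA X Y -> in_commA Y -> in_commA X.
Proof. by move=> E [s Hs]; exists s; apply: eqA_trans Hs. Qed.

Lemma in_commA_nil : in_commA ([::] : alg K).
Proof. by exists [::]. Qed.

Lemma in_commA_cat X Y : in_commA X -> in_commA Y -> in_commA (X ++ Y).
Proof.
move=> [s1 H1] [s2 H2]; exists (s1 ++ s2).
by rewrite map_cat flatten_cat; apply: eqA_cat.
Qed.

Lemma in_commA_scaleA c X : in_commA X -> in_commA (scaleA c X).
Proof.
move=> [s H]; exists [seq ((c * p.1.1, p.1.2), p.2) | p <- s] => g.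
rewrite coefA_scaleA H !coefA_evalA !evalA_flatten big_map mulr_sumr.
by apply: eq_bigr => p _ /=; rewrite !evalA_scaleA mulrA.
Qed.

Lemma in_commA_commutator A B : in_commA (mulA A B ++ scaleA (-1) (mulA B A)).
Proof. by exists [:: ((1, A), B)] => g; rewrite /= cats0 coefA_scaleA mul1r. Qed.

Definition eqmodC X Y := in_commA (X ++ scaleA (-1) Y).

Lemma eqmodC_in_commA X Y : eqmodC X Y -> in_commA Y -> in_commA X.
Proof.
move=> EXY CY; apply: in_commA_eqA (in_commA_cat EXY CY) => g.
by rewrite !coefA_cat coefA_scaleA; ring.
Qed.

Lemma eqA_eqmodC X Y : eqA X Y -> eqmodC X Y.
Proof.
move=> E; apply: in_commA_eqA in_commA_nil => g.
by rewrite coefA_cat coefA_scaleA E /coefA big_nil; ring.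
Qed.

Lemma eqmodC_trans X Y Z : eqmodC X Y -> eqmodC Y Z -> eqmodC X Z.
Proof.
move=> E1 E2; apply: in_commA_eqA (in_commA_cat E1 E2) => g.
by rewrite !(coefA_cat, coefA_scaleA); ring.
Qed.

Lemma eqmodC_cat X X' Y Y' : eqmodC X X' -> eqmodC Y Y' -> eqmodC (X ++ Y) (X' ++ Y').
Proof.
move=> E1 E2; apply: in_commA_eqA (in_commA_cat E1 E2) => g.
by rewrite !(coefA_cat, coefA_scaleA); ring.
Qed.

Lemma eqmodC_scaleA c X Y : eqmodC X Y -> eqmodC (scaleA c X) (scaleA c Y).
Proof.
move=> E; apply: in_commA_eqA (in_commA_scaleA c E) => g.
by rewrite !(coefA_cat, coefA_scaleA); ring.
Qed.

Lemma eqmodC_mulAC A B : eqmodC (mulA A B) (mulA B A).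
Proof. exact: in_commA_commutator. Qed.

(** * The bracket with insertions *)

(* [sum x Z y W], where [dbr_word p q = sum x (x) y] is summed over the words
   [p] of [X] and [q] of [Y], which are not reduced first. *)
Definition bracket_ins X Y Z W : alg K :=
  flatten [seq flatten [seq flatten [seq flatten [seq
    [seq (p.1 * q.1 * r.1 * s.1 * t.1, t.2.1 ++ r.2 ++ t.2.2 ++ s.2) | t <- dbr_word K p.2 q.2]
   | s <- W] | r <- Z] | q <- Y] | p <- X].

Lemma evalA_bracket_ins X Y Z W f :
  evalA (bracket_ins X Y Z W) f =
  evalA X (fun a => evalA Y (fun b => evalA Z (fun r => evalA W (fun s =>
    \sum_(t <- dbr_word K a b) t.1 * f (t.2.1 ++ r ++ t.2.2 ++ s))))).
Proof.
rewrite /evalA /bracket_ins big_flatten big_map; apply: eq_bigr => p _.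
rewrite big_flatten big_map !mulr_sumr; apply: eq_bigr => q _.
rewrite big_flatten big_map !mulr_sumr; apply: eq_bigr => r _.
rewrite big_flatten big_map !mulr_sumr; apply: eq_bigr => s _.
by rewrite big_map !mulr_sumr; apply: eq_bigr => t _ /=; ring.
Qed.

Lemma coefA_bracket_ins X Y Z W g : coefA (bracket_ins X Y Z W) g =
  evalA X (fun a => evalA Y (fun b => evalA Z (fun r => evalA W (dbr_coef g [::] a b r)))).
Proof. by rewrite coefA_evalA evalA_bracket_ins. Qed.

Lemma bracketK_ins X Y : eqA (bracketK X Y) (bracket_ins X Y (oneA K) (oneA K)).
Proof.
move=> g; rewrite coefA_bracket_ins coefA_evalA /bracketK evalA_flatten [RHS]/evalA.
apply: eq_bigr => p _; rewrite evalA_flatten mulr_sumr; apply: eq_bigr => q _.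
rewrite !evalA_oneA dbr_coef_reducel dbr_coef_reducer /dbr_coef /evalA big_map !mulr_sumr.
by apply: eq_bigr => t _ /=; rewrite !cats0; ring.
Qed.

Lemma bracket_ins_mull X1 X2 Y Z W :
  eqA (bracket_ins (mulA X1 X2) Y Z W)
      (bracket_ins X1 Y (mulA X2 Z) W ++ bracket_ins X2 Y (mulA Z X1) W).
Proof.
move=> g; rewrite coefA_cat !coefA_bracket_ins evalA_mulA.
under [X in _ = X + _]evalA_ext => a1 do under evalA_ext => b do rewrite evalA_mulA.
under [X in _ = X + _]evalA_ext => a1 do rewrite evalA_exch.
under [X in _ = _ + X]evalA_ext => a2 do under evalA_ext => b do rewrite evalA_mulA.
under [X in _ = _ + X]evalA_ext => a2 do under evalA_ext => b do rewrite evalA_exch.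
under [X in _ = _ + X]evalA_ext => a2 do rewrite evalA_exch.
rewrite [X in _ = _ + X]evalA_exch -evalA_add; apply: evalA_ext => a1.
rewrite -evalA_add; apply: evalA_ext => a2.
rewrite -evalA_add; apply: evalA_ext => b.
rewrite -evalA_add; apply: evalA_ext => r.
by rewrite -evalA_add; apply: evalA_ext => s; rewrite dbr_coef_catl.
Qed.

Lemma bracket_ins_mulr X Y1 Y2 Z W :
  eqA (bracket_ins X (mulA Y1 Y2) Z W)
      (bracket_ins X Y1 Z (mulA Y2 W) ++ mulA Y1 (bracket_ins X Y2 Z W)).
Proof.
move=> g; rewrite coefA_cat !coefA_bracket_ins coefA_evalA evalA_mulA.
under evalA_ext => a do rewrite evalA_mulA.
under [X in _ = X + _]evalA_ext => a do
  under evalA_ext => b1 do under evalA_ext => r do rewrite evalA_mulA.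
under [X in _ = X + _]evalA_ext => a do under evalA_ext => b1 do rewrite evalA_exch.
under [X in _ = _ + X]evalA_ext => b1 do rewrite evalA_bracket_ins.
rewrite [X in _ = _ + X]evalA_exch -evalA_add; apply: evalA_ext => a.
rewrite -evalA_add; apply: evalA_ext => b1.
rewrite -evalA_add; apply: evalA_ext => b2.
rewrite -evalA_add; apply: evalA_ext => r.
by rewrite -evalA_add; apply: evalA_ext => s; rewrite dbr_coef_catr.
Qed.

Lemma bracket_ins_mulA X Y Z W V :
  eqA (bracket_ins X Y Z (mulA W V)) (mulA (bracket_ins X Y Z W) V).
Proof.
move=> g; rewrite coefA_bracket_ins coefA_evalA evalA_mulA [RHS]evalA_exch.
under [RHS]evalA_ext => c do rewrite evalA_bracket_ins.
under evalA_ext => a do under evalA_ext => b do under evalA_ext => r do rewrite evalA_mulA.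
rewrite [RHS]evalA_exch; apply: evalA_ext => a.
rewrite [RHS]evalA_exch; apply: evalA_ext => b.
rewrite [RHS]evalA_exch; apply: evalA_ext => r.
rewrite [RHS]evalA_exch; apply: evalA_ext => s; apply: evalA_ext => c.
by apply: eq_bigr => t _; rewrite -!catA.
Qed.

Lemma bracket_ins_eqA_mid X Y Z Z' W : eqA Z Z' ->
  eqA (bracket_ins X Y Z W) (bracket_ins X Y Z' W).
Proof.
move=> EZ g; rewrite !coefA_bracket_ins; do 2 apply: evalA_ext => ?.
apply: evalA_eqA => // r; apply: evalA_ext => s.
by apply: dbr_coef_congr_mid; rewrite reduce_idem.
Qed.

Lemma bracket_ins_eqA_post X Y Z W W' : eqA W W' ->
  eqA (bracket_ins X Y Z W) (bracket_ins X Y Z W').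
Proof.
move=> EW g; rewrite !coefA_bracket_ins; do 3 apply: evalA_ext => ?.
by apply: evalA_eqA => // s; apply: dbr_coef_congr_post; rewrite reduce_idem.
Qed.

Lemma bracket_ins_onel Y Z W : eqA (bracket_ins (oneA K) Y Z W) [::].
Proof.
move=> g; rewrite coefA_bracket_ins evalA_oneA /coefA big_nil.
rewrite -(evalA0 Y); apply: evalA_ext => b.
rewrite -(evalA0 Z); apply: evalA_ext => r.
by rewrite -(evalA0 W); apply: evalA_ext => s; rewrite /dbr_coef big_nil.
Qed.

Lemma bracket_ins_oner X Z W : eqA (bracket_ins X (oneA K) Z W) [::].
Proof.
move=> g; rewrite coefA_bracket_ins /coefA big_nil.
rewrite -(evalA0 X); apply: evalA_ext => a; rewrite evalA_oneA.
rewrite -(evalA0 Z); apply: evalA_ext => r.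
rewrite -(evalA0 W); apply: evalA_ext => s.
rewrite /dbr_coef /dbr_word /=.
by elim: (iota 0 (size a)) => [|i l IH]; rewrite ?big_nil //= big_cat /= IH big_nil addr0.
Qed.

Lemma powA_add x m n : eqA (mulA (powA x m) (powA x n)) (powA x (m + n)).
Proof.
elim: m => [|m IH]; first exact: mul1A.
by rewrite addSn; apply: eqA_trans (mulA_assoc _ _ _) (mulA_eqr _ IH).
Qed.

Lemma powA_mulr x n : eqA (mulA (powA x n) x) (powA x n.+1).
Proof.
apply: eqA_trans (mulA_eqr _ (eqA_sym (mulA1 x))) _.
by rewrite -addn1; exact: (powA_add x n 1).
Qed.

Lemma bracket_ins_powl x Y W N c Z :
  (forall n, in_commA (bracket_ins x Y (powA x n) W)) -> eqA Z (powA x c) ->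
  in_commA (bracket_ins (powA x N) Y Z W).
Proof.
move=> Cx; elim: N c Z => [|N IH] c Z EZ.
  exact: in_commA_eqA (bracket_ins_onel _ _ _) in_commA_nil.
apply: in_commA_eqA (bracket_ins_mull _ _ _ _ _) _; apply: in_commA_cat.
  have EZN := eqA_trans (mulA_eqr _ EZ) (powA_add x N c).
  exact: in_commA_eqA (bracket_ins_eqA_mid _ _ _ EZN) (Cx _).
exact: (IH c.+1) (eqA_trans (mulA_eql _ EZ) (powA_mulr x c)).
Qed.

(* The Leibniz rule in the second argument leaves a factor [x] on the left;
   modulo [A,A] it is rotated to the right end and absorbed into [W]. *)
Lemma bracket_ins_powr x X Z M d W :
  (forall m, in_commA (bracket_ins X x Z (powA x m))) -> eqA W (powA x d) ->
  in_commA (bracket_ins X (powA x M) Z W).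
Proof.
move=> Cx; elim: M d W => [|M IH] d W EW.
  exact: in_commA_eqA (bracket_ins_oner _ _ _) in_commA_nil.
apply: in_commA_eqA (bracket_ins_mulr _ _ _ _ _) _; apply: in_commA_cat.
  have EWM := eqA_trans (mulA_eqr _ EW) (powA_add x M d).
  exact: in_commA_eqA (bracket_ins_eqA_post _ _ _ EWM) (Cx _).
apply: eqmodC_in_commA (eqmodC_mulAC _ _) _.
apply: in_commA_eqA (eqA_sym (bracket_ins_mulA _ _ _ _ _)) _.
exact: (IH d.+1) (eqA_trans (mulA_eql _ EW) (powA_mulr x d)).
Qed.

Lemma in_commA_bracketK_powA x N M :
  (forall p q, in_commA (bracket_ins x x (powA x p) (powA x q))) ->
  in_commA (bracketK (powA x N) (powA x M)).
Proof.
move=> Cx; apply: in_commA_eqA (bracketK_ins _ _) _.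
apply: (@bracket_ins_powl _ _ _ _ 0) => // p.
exact: (@bracket_ins_powr _ _ _ _ 0).
Qed.

Definition tensor_ins A C Z W := mulA A (mulA Z (mulA C W)).

Definition coef_ins Z W g (u v : word) : K :=
  evalA Z (fun r => evalA W (fun s => coefw g (u ++ r ++ v ++ s))).

Lemma coef_ins_reduce Z W g u v : coef_ins Z W g (reduce u) (reduce v) = coef_ins Z W g u v.
Proof. by do 2 apply: evalA_ext => ?; rewrite -(coefw_reduce2 g [::]). Qed.

Lemma coefA_tensor_ins A C Z W g :
  coefA (tensor_ins A C Z W) g = evalA A (fun a => evalA C (coef_ins Z W g a)).
Proof.
rewrite coefA_evalA evalA_mulA; apply: evalA_ext => a.
rewrite evalA_mulA; under evalA_ext => r do rewrite evalA_mulA.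
by rewrite evalA_exch.
Qed.

Lemma evalA_dbr_coef Z W g a b :
  evalA Z (fun r => evalA W (dbr_coef g [::] a b r)) =
  \sum_(t <- dbr_word K a b) t.1 * coef_ins Z W g t.2.1 t.2.2.
Proof.
under evalA_ext => r do rewrite evalA_sum.
rewrite evalA_sum; apply: eq_bigr => t _.
by under evalA_ext => r do rewrite evalA_mull; rewrite evalA_mull.
Qed.

Lemma tensor_ins_powA x A C p q :
  eqA (mulA (powA x q) A) (mulA A (powA x q)) ->
  eqmodC (tensor_ins A C (powA x p) (powA x q)) (mulA (mulA C A) (powA x (p + q))).
Proof.
move=> commA.
apply: eqmodC_trans (eqA_eqmodC (eqA_sym (mulA_assoc _ _ _))) _.
apply: eqmodC_trans (eqmodC_mulAC _ _) _; apply: eqA_eqmodC.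
apply: eqA_trans (mulA_assoc _ _ _) _; apply: eqA_trans _ (eqA_sym (mulA_assoc _ _ _)).
apply: mulA_eqr; apply: eqA_trans (eqA_sym (mulA_assoc _ _ _)) _.
apply: eqA_trans (mulA_eql _ commA) _; apply: eqA_trans (mulA_assoc _ _ _) _.
by apply: mulA_eqr; rewrite addnC; apply: powA_add.
Qed.

(** * The element h *)

Local Notation h := (hA K).

Definition monoA (w : word) : alg K := [:: (1, w)].
Definition uivi : alg K := monoA [:: Ui; Vi].
Definition dbr_hh_left : alg K := monoA [:: U; V] ++ scaleA (-1) (monoA [:: V; U]).
Definition dbr_hh_right : alg K :=
  monoA [:: Vi] ++ monoA [:: Vi; Ui] ++ monoA [:: Vi; Ui; Vi] ++
  monoA [:: Ui] ++ monoA [:: Ui; Vi; Ui] ++ monoA [:: Ui; Vi; Ui; Vi].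

(* Summing the letter table over the 25 pairs of monomials of [h] gives, after
   free reduction, [dbr h h = (uv - vu) (x) 1 + 1 (x) dbr_hh_right
   - (h + 1) (x) u^-1 v^-1]. *)
Lemma evalA_dbr_hh (F : word -> word -> K) :
  evalA h (fun a => evalA h (fun b =>
    \sum_(t <- dbr_word K a b) t.1 * F (reduce t.2.1) (reduce t.2.2))) =
  evalA dbr_hh_left (fun a => evalA (oneA K) (F a)) +
  evalA (oneA K) (fun a => evalA dbr_hh_right (F a)) -
  evalA (h ++ oneA K) (fun a => evalA uivi (F a)).
Proof. by rewrite /evalA /= !big_cons !big_nil /=; ring. Qed.

Lemma bracket_ins_hh Z W :
  eqA (bracket_ins h h Z W)
      (tensor_ins dbr_hh_left (oneA K) Z W ++ tensor_ins (oneA K) dbr_hh_right Z W ++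
       scaleA (-1) (tensor_ins (h ++ oneA K) uivi Z W)).
Proof.
move=> g; rewrite coefA_bracket_ins coefA_cat (coefA_cat (tensor_ins _ _ _ _)) coefA_scaleA.
rewrite !coefA_tensor_ins addrA mulN1r.
under evalA_ext => a do under evalA_ext => b do rewrite evalA_dbr_coef.
under evalA_ext => a do under evalA_ext => b do
  under eq_bigr => t _ do rewrite -coef_ins_reduce.
exact: evalA_dbr_hh.
Qed.

Definition dbr_hh_sum : alg K :=
  dbr_hh_left ++ dbr_hh_right ++ scaleA (-1) (mulA uivi (h ++ oneA K)).

Definition h_comm_witness : alg K := scaleA (-1) (monoA [:: U] ++ monoA [:: Vi]).

Lemma dbr_hh_sum_commutator :
  eqA dbr_hh_sum (mulA h h_comm_witness ++ scaleA (-1) (mulA h_comm_witness h)).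
Proof. by move=> g; rewrite !coefA_evalA /evalA /= !big_cons !big_nil /=; ring. Qed.

Lemma bracket_ins_hh_powA p q :
  eqmodC (bracket_ins h h (powA h p) (powA h q)) (mulA dbr_hh_sum (powA h (p + q))).
Proof.
have comm1 : eqA (mulA (powA h q) (oneA K)) (mulA (oneA K) (powA h q)).
  exact: eqA_trans (mulA1 _) (eqA_sym (mul1A _)).
have commh1 : eqA (mulA (powA h q) (h ++ oneA K)) (mulA (h ++ oneA K) (powA h q)).
  rewrite mulA_catl; apply: eqA_trans (mulA_catr _ _ _) (eqA_cat (powA_mulr _ _) comm1).
apply: eqmodC_trans (eqA_eqmodC (bracket_ins_hh _ _)) _.
rewrite /dbr_hh_sum (mulA_catl dbr_hh_left) (mulA_catl dbr_hh_right).
apply: eqmodC_cat; last apply: eqmodC_cat.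
- apply: eqA_eqmodC; rewrite /tensor_ins; apply: mulA_eqr.
  exact: eqA_trans (mulA_eqr _ (mul1A _)) (powA_add _ _ _).
- apply: eqmodC_trans (tensor_ins_powA _ _ comm1) _.
  exact: eqA_eqmodC (mulA_eql _ (mulA1 _)).
- apply: eqmodC_trans _ (eqA_eqmodC (eqA_sym (mulA_scalel _ _ _))).
  exact: eqmodC_scaleA (tensor_ins_powA _ _ commh1).
Qed.

Lemma in_commA_dbr_hh_sum_powA n : in_commA (mulA dbr_hh_sum (powA h n)).
Proof.
set X := h_comm_witness.
apply: in_commA_eqA (mulA_eql _ dbr_hh_sum_commutator) _.
rewrite (mulA_catl (mulA h X)).
apply: in_commA_eqA (eqA_cat (mulA_assoc _ _ _) (mulA_scalel _ _ _)) _.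
have EXh : eqA (mulA (mulA X h) (powA h n)) (mulA (mulA X (powA h n)) h).
  apply: eqA_trans (mulA_assoc _ _ _) _; apply: eqA_trans _ (eqA_sym (mulA_assoc _ _ _)).
  apply: mulA_eqr; exact: (eqA_sym (powA_mulr h n)).
apply: in_commA_eqA (eqA_cat (eqA_refl _) (eqA_scaleA _ EXh)) _.
exact: in_commA_commutator.
Qed.

End GroupAlgebraBracket.

Theorem mainTheorem2 (R : realType) (N M : nat) :
  (0 < N)%N -> (0 < M)%N ->
  in_commA (bracketK (powA (hA (R[i])%C) N) (powA (hA (R[i])%C) M)).
Proof.
move=> _ _; apply: in_commA_bracketK_powA => p q.
exact: eqmodC_in_commA (bracket_ins_hh_powA _ p q) (in_commA_dbr_hh_sum_powA _ _).
Qed.
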